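(* Let $\mathbb{F}$ be $\mathbb{R}$ or $\mathbb{C}$. Let $U,V\in\mathbb{F}(\epsilon)^{r\times n}$, $A_0\in\mathbb{F}(\epsilon)^{r\times r}$, let $X$ be the $n\times n$ diagonal matrix with diagonal entries $x_1,\ldots,x_n$, and let $P=\det(A_0+UXV^T)$. Let $X'$ be the $(2n+r)\times(2n+r)$ diagonal matrix with diagonal entries $x_1,\ldots,x_{2n+r}$. Then there exist $U',V'\in\mathbb{F}(\epsilon)^{(n+r)\times(2n+r)}$ such that: (i) if $Q$ denotes the polynomial in $x_1,\ldots,x_n$ obtained by setting $x_{n+1}=\cdots=x_{2n+r}=1$ in $\det(U'X'V'^T)$, then $P=Q$; (ii) if $\lim_{\epsilon\to0}P$ exists, then $\lim_{\epsilon\to0}\det(U'X'V'^T)$ also exists.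
   Context: $\mathbb{F}(\epsilon)$ is the field of rational functions in the indeterminate $\epsilon$; $x_1,\ldots,x_{2n+r}$ are indeterminates. For a polynomial in the $x_i$ with coefficients in $\mathbb{F}(\epsilon)$, its limit as $\epsilon\to0$ is said to exist if the limit at $\epsilon=0$ of the coefficient of every monomial exists, and the limit is then taken coefficientwise. *)

From HB Require Import structures.
From mathcomp Require Import all_boot all_order all_algebra.
From mathcomp Require Import mpoly.
From mathcomp Require Import all_classical all_reals all_analysis.
From mathcomp Require Import complex.
Set Implicit Arguments. Unset Strict Implicit. Unset Printing Implicit Defensive.
Import Order.TTheory GRing.Theory Num.Theory.
Import numFieldNormedType.Exports.
Local Open Scope classical_set_scope.
Local Open Scope ring_scope.

Notation ratfun F := {fraction {poly F}}.

Definition has_lim0 (F : numFieldType) (f : ratfun F) : Prop :=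
  exists (a b : {poly F}), b != 0 /\ f = (tofrac a) / (tofrac b) /\
    exists L : F, (fun e : F => a.[e] / b.[e]) @ 0^' --> L.

Definition mpoly_has_lim0 (F : numFieldType) (m : nat)
  (p : mpoly.mpoly m (ratfun F)) : Prop :=
  forall mon : mpoly.multinom m, has_lim0 (mpoly.mcoeff mon p).

Definition mxC (F : numFieldType) (k p q : nat) (M : 'M[ratfun F]_(p, q))
  : 'M[mpoly.mpoly k (ratfun F)]_(p, q) := map_mx (@mpoly.mpolyC k _) M.

Definition Xdiag (F : numFieldType) (k : nat) : 'M[mpoly.mpoly k (ratfun F)]_k :=
  diag_mx (\row_(i < k) @mpoly.mpolyX k (ratfun F) (mpoly.mnm1 i)).

Definition detP (F : numFieldType) (r n : nat) (A0 : 'M[ratfun F]_r)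
  (U V : 'M[ratfun F]_(r, n)) : mpoly.mpoly n (ratfun F) :=
  \det (mxC n A0 + mxC n U *m Xdiag F n *m (mxC n V)^T).

Definition detPP (F : numFieldType) (r n : nat) (U' V' : 'M[ratfun F]_(n + r, 2 * n + r))
  : mpoly.mpoly (2 * n + r) (ratfun F) :=
  \det (mxC (2 * n + r) U' *m Xdiag F (2 * n + r) *m (mxC (2 * n + r) V')^T).

(* substitution x_{n+1} = ... = x_{2n+r} = 1 (and x_i |-> x_i for i <= n) *)
Definition subst_ones (F : numFieldType) (n r : nat)
  (p : mpoly.mpoly (2 * n + r) (ratfun F)) : mpoly.mpoly n (ratfun F) :=
  mpoly.comp_mpoly
    [tuple (if @insub nat (fun i => i < n)%N _ (val i) is Some j
            then @mpoly.mpolyX n (ratfun F) (mpoly.mnm1 j) else 1)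
       | i < 2 * n + r] p.

Definition lemma12_stmt (F : numFieldType) : Prop :=
  forall (r n : nat) (U V : 'M[ratfun F]_(r, n)) (A0 : 'M[ratfun F]_r),
  exists U' V' : 'M[ratfun F]_(n + r, 2 * n + r),
    detP A0 U V = @subst_ones F n r (detPP U' V') /\
    (mpoly_has_lim0 (detP A0 U V) -> mpoly_has_lim0 (detPP U' V')).

From HB Require Import structures.
From mathcomp Require Import all_boot all_order all_algebra.
From mathcomp Require Import mpoly.
From mathcomp Require Import all_classical all_reals all_analysis.
From mathcomp Require Import complex.
From mathcomp Require Import perm.
Set Implicit Arguments. Unset Strict Implicit. Unset Printing Implicit Defensive.
Import Order.TTheory GRing.Theory Num.Theory.
Import numFieldNormedType.Exports.
Local Open Scope ring_scope.

(* Index the 2n+r variables as x_a, y_a (a < n) and z_l (l < r).  The columns of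
   U' at x_a and y_a are the unit vector e_a and at z_l it is e_(n+l); the columns
   of V' at x_a, y_a, z_l are (0, -V_a), e_a and (U_l, A0_l), where V_a is the
   a-th column of V and U_l, A0_l are the l-th rows of U and A0.  Setting
   y = z = 1 turns U' X' V'^T into the block matrix [[1, -X V^T], [U, A0]], whose
   determinant is det(A0 + U X V^T) by the Schur complement formula.
   Since each column of U' has a single nonzero entry, every term of the Leibniz
   expansion of det(U' X' V'^T) picks in each row a variable of that row's family
   {x_a, y_a} or {z_l}.  Such a choice is determined by the set of a for which
   x_a is picked, which the substitution remembers; so distinct monomials of
   det(U' X' V'^T) stay distinct after substitution, and each coefficient of
   det(U' X' V'^T) is zero or a coefficient of P. *)

Lemma split_lshift (m p : nat) (i : 'I_m) : fintype.split (lshift p i) = inl i.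
Proof. exact: (unsplitK (inl _ i)). Qed.

Lemma split_rshift (m p : nat) (i : 'I_p) : fintype.split (rshift m i) = inr i.
Proof. exact: (unsplitK (inr _ i)). Qed.

Lemma nat_of_bool_inj : injective nat_of_bool.
Proof. by case; case. Qed.

Lemma sum_deltaZ (R : pzRingType) (W : lmodType R) (I : finType) (i : I)
    (G : I -> W) :
  \sum_j (i == j)%:R *: G j = G i.
Proof.
rewrite (bigD1 i) //= eqxx scale1r big1 ?addr0 // => j /negbTE.
by rewrite eq_sym => ->; rewrite scale0r.
Qed.

Lemma det_block1 (R : comRingType) (m p : nat)
    (B : 'M[R]_(m, p)) (C : 'M[R]_(p, m)) (D : 'M[R]_p) :
  \det (block_mx 1 B C D) = \det (D - C *m B).
Proof.
have -> : block_mx 1 B C D = block_mx 1 0 C 1 *m block_mx 1 B 0 (D - C *m B).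
  by rewrite mulmx_block !mul1mx !mulmx1 !mul0mx !addr0 addrC subrK.
by rewrite det_mulmx det_lblock det_ublock !det1 !mul1r.
Qed.

Lemma mulmx_Xdiag_trmx (F : numFieldType) (N p : nat) (A B : 'M[ratfun F]_(p, N)) :
  mxC N A *m Xdiag F N *m (mxC N B)^T =
  \matrix_(i, j) \sum_k (A i k * B j k) *: 'X_[U_(k)].
Proof.
apply/matrixP => i j; rewrite mul_mx_diag !mxE; apply: eq_bigr => k _.
by rewrite !mxE -!mul_mpolyC rmorphM mulrAC.
Qed.

Lemma det_mx_sumZX (R : comRingType) (N p K : nat) (h : 'I_K -> 'X_{1..N})
    (c : 'I_p -> 'I_p -> 'I_K -> R) :
  \det (\matrix_(i, j) \sum_k c i j k *: 'X_[h k] : 'M[{mpoly R[N]}]_p) =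
  \sum_(t : 'S_p * {ffun 'I_p -> 'I_K})
     (((-1) ^+ t.1 * \prod_i c i (t.1 i) (t.2 i)) *: 'X_[\sum_i h (t.2 i)]).
Proof.
rewrite -(pair_big xpredT xpredT (fun (s : 'S_p) (f : {ffun 'I_p -> 'I_K}) =>
  ((-1) ^+ s * \prod_i c i (s i) (f i)) *: 'X_[\sum_i h (f i)])) /=.
apply: eq_bigr => s _; under eq_bigr do rewrite mxE.
rewrite bigA_distr_bigA mulr_sumr; apply: eq_bigr => f _.
rewrite scaler_prod (big_morph (@mpolyX N R) (@mpolyXD N R) (@mpolyX0 N R)).
by rewrite -(rmorph_sign (@mpolyC N R)) mul_mpolyC scalerA.
Qed.

Lemma mcoeff_sumZX (T : finType) (R : nzRingType) (N : nat) (d : T -> R)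
    (g : T -> 'X_{1..N}) m :
  (\sum_t d t *: 'X_[g t] : {mpoly R[N]})@_m = \sum_t d t * (g t == m)%:R.
Proof. by rewrite raddf_sum /=; apply: eq_bigr => t _; rewrite mcoeffZ mcoeffX. Qed.

Definition mcoeffs_among (R : nzRingType) (N N' : nat)
    (p : {mpoly R[N]}) (q : {mpoly R[N']}) :=
  forall m, p@_m = 0 \/ exists m', p@_m = q@_m'.

Lemma mcoeffs_among_sumZX (T : finType) (R : nzRingType) (N N' : nat) (d : T -> R)
    (g : T -> 'X_{1..N}) (g' : T -> 'X_{1..N'}) :
  {in [pred t | d t != 0] &, forall t t', (g t == g t') = (g' t == g' t')} ->
  mcoeffs_among (\sum_t d t *: 'X_[g t]) (\sum_t d t *: 'X_[g' t]).
Proof.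
move=> gg' m; rewrite !mcoeff_sumZX.
have [/existsP [t0 /andP [nz0 /eqP <-]] | none] :=
  boolP [exists t, (d t != 0) && (g t == m)].
  right; exists (g' t0); rewrite mcoeff_sumZX; apply: eq_bigr => t _.
  have [-> | nz] := eqVneq (d t) 0; first by rewrite !mul0r.
  by rewrite gg' ?inE.
left; apply: big1 => t _.
have [-> | nz] := eqVneq (d t) 0; first by rewrite mul0r.
case: eqP => [gm | _]; last by rewrite mulr0.
by move: none; rewrite negb_exists => /forallP /(_ t); rewrite nz gm eqxx.
Qed.

Lemma has_lim0_zero (F : numFieldType) : has_lim0 (0 : ratfun F).
Proof.
exists 0, 1; split; first exact: oner_neq0.
split; first by rewrite rmorph0 mul0r.
exists 0; apply: cvg_near_cst; near=> e.
by rewrite horner0 mul0r.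
Unshelve. all: by end_near.
Qed.

Lemma mpoly_has_lim0_among (F : numFieldType) (N N' : nat)
    (p : {mpoly ratfun F[N]}) (q : {mpoly ratfun F[N']}) :
  mcoeffs_among p q -> mpoly_has_lim0 q -> mpoly_has_lim0 p.
Proof.
by move=> pq hq m; case: (pq m) => [-> | [m' ->]]; [exact: has_lim0_zero | exact: hq].
Qed.

Section LiftedMatrices.
Variables n r : nat.
Local Notation N := (2 * n + r)%N.

Lemma var_split : (2 * n + r = n + n + r)%N.
Proof. by rewrite mul2n addnn. Qed.

Definition var_kind (k : 'I_N) : 'I_n + 'I_n + 'I_r :=
  match fintype.split (cast_ord var_split k) with
  | inl a => inl (fintype.split a)
  | inr l => inr l
  end.

Definition xvar (a : 'I_n) : 'I_N := cast_ord (esym var_split) (lshift r (lshift n a)).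
Definition yvar (a : 'I_n) : 'I_N := cast_ord (esym var_split) (lshift r (rshift n a)).
Definition zvar (l : 'I_r) : 'I_N := cast_ord (esym var_split) (rshift (n + n) l).

Variant var_kind_spec (k : 'I_N) : 'I_n + 'I_n + 'I_r -> Type :=
  | VarX a of k = xvar a : var_kind_spec k (inl (inl a))
  | VarY a of k = yvar a : var_kind_spec k (inl (inr a))
  | VarZ l of k = zvar l : var_kind_spec k (inr l).

Lemma var_kindP k : var_kind_spec k (var_kind k).
Proof.
rewrite /var_kind; have := cast_ordK var_split k.
rewrite -(fintype.splitK (cast_ord var_split k)).
case: (fintype.split (cast_ord var_split k)) => [a|l] /= <-; last first.
  by rewrite split_rshift; constructor.
rewrite -(fintype.splitK a); case: (fintype.split a) => b /=.
  by rewrite !split_lshift; constructor.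
by rewrite split_lshift split_rshift; constructor.
Qed.

Lemma var_kind_xvar a : var_kind (xvar a) = inl (inl a).
Proof. by rewrite /var_kind cast_ordKV !split_lshift. Qed.

Lemma var_kind_yvar a : var_kind (yvar a) = inl (inr a).
Proof. by rewrite /var_kind cast_ordKV split_lshift split_rshift. Qed.

Lemma var_kind_zvar l : var_kind (zvar l) = inr l.
Proof. by rewrite /var_kind cast_ordKV split_rshift. Qed.

Lemma var_kind_inj : injective var_kind.
Proof.
move=> k k'; case: (var_kindP k) => [a|a|l] ->; case: (var_kindP k') => [b|b|l'] -> //;
  by case=> ->.
Qed.

Lemma eq_xvar k a : (k == xvar a) = (var_kind k == inl (inl a)).
Proof. by rewrite -var_kind_xvar (inj_eq var_kind_inj). Qed.

Lemma big_vars (W : nmodType) (G : 'I_N -> W) :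
  \sum_k G k = \sum_a G (xvar a) + \sum_a G (yvar a) + \sum_l G (zvar l).
Proof.
rewrite (reindex (cast_ord (esym var_split))); last first.
  by exists (cast_ord var_split) => x _; rewrite ?cast_ordK ?cast_ordKV.
by rewrite big_split_ord /= big_split_ord.
Qed.

Definition var_row (k : 'I_N) : 'I_(n + r) :=
  match var_kind k with
  | inl (inl a) | inl (inr a) => lshift r a
  | inr l => rshift n l
  end.

Lemma var_row_xvar a : var_row (xvar a) = lshift r a.
Proof. by rewrite /var_row var_kind_xvar. Qed.

Lemma var_row_yvar a : var_row (yvar a) = lshift r a.
Proof. by rewrite /var_row var_kind_yvar. Qed.

Lemma var_row_zvar l : var_row (zvar l) = rshift n l.
Proof. by rewrite /var_row var_kind_zvar. Qed.

Lemma var_row_lshift k a : var_row k = lshift r a -> k = xvar a \/ k = yvar a.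
Proof.
case: (var_kindP k) => [b|b|l] ->; rewrite ?var_row_xvar ?var_row_yvar ?var_row_zvar.
- by move/lshift_inj ->; left.
- by move/lshift_inj ->; right.
- by move/eqP; rewrite eq_rlshift.
Qed.

Lemma var_row_rshift k l : var_row k = rshift n l -> k = zvar l.
Proof.
case: (var_kindP k) => [b|b|l'] ->; rewrite ?var_row_xvar ?var_row_yvar ?var_row_zvar.
- by move/eqP; rewrite eq_lrshift.
- by move/eqP; rewrite eq_lrshift.
- by move/rshift_inj ->.
Qed.

Definition subst_mnm (k : 'I_N) : 'X_{1..n} :=
  if var_kind k is inl (inl a) then U_(a)%MM else 0%MM.

Lemma subst_mnmE k a : subst_mnm k a = (k == xvar a).
Proof.
rewrite eq_xvar /subst_mnm.
by case: var_kindP => [b|b|l] _; rewrite ?mnm1E ?mnm0E.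
Qed.

Lemma subst_ones_mpolyX (F : numFieldType) k :
  @subst_ones F n r 'X_[U_(k)] = 'X_[subst_mnm k].
Proof.
rewrite /subst_ones comp_mpolyXU -tnth_nth tnth_mktuple /subst_mnm.
case: (var_kindP k) => [a|a|l] ->; case: insubP => [j /= lt_n val_j | /= ge_n].
- by congr mpolyX; congr mnm1; apply: val_inj.
- by move: ge_n; rewrite ltn_ord.
- by move: lt_n; rewrite ltnNge leq_addr.
- by rewrite mpolyX0.
- by move: lt_n; rewrite -addnA ltnNge leq_addr.
- by rewrite mpolyX0.
Qed.

Definition row_adapted (f : {ffun 'I_(n + r) -> 'I_N}) :=
  [forall i, var_row (f i) == i].

Definition mnm_of (f : {ffun 'I_(n + r) -> 'I_N}) : 'X_{1..N} := (\sum_i U_(f i))%MM.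

Lemma mnm_of_xvar f a :
  row_adapted f -> mnm_of f (xvar a) = (f (lshift r a) == xvar a).
Proof.
move=> /forallP adf; rewrite mnm_sumE (bigD1 (lshift r a)) //= mnm1E.
rewrite big1 ?addn0 // => i ne.
rewrite mnm1E; case: eqP => // fi.
by have := adf i; rewrite fi var_row_xvar eq_sym (negbTE ne).
Qed.

Lemma subst_mnm_sumE (f : {ffun 'I_(n + r) -> 'I_N}) a :
  (\sum_i subst_mnm (f i))%MM a = mnm_of f (xvar a).
Proof. by rewrite !mnm_sumE; apply: eq_bigr => i _; rewrite subst_mnmE mnm1E. Qed.

Lemma row_adapted_eq f f' : row_adapted f -> row_adapted f' ->
  (forall a, mnm_of f (xvar a) = mnm_of f' (xvar a)) -> f = f'.
Proof.
move=> af af' eq_f; apply/ffunP => i; rewrite -(fintype.splitK i).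
case: (fintype.split i) => [a|l] /=; last first.
  by rewrite (var_row_rshift (eqP (forallP af _))) (var_row_rshift (eqP (forallP af' _))).
have := eq_f a; rewrite !mnm_of_xvar // => /nat_of_bool_inj.
have xy : (yvar a == xvar a) = false by rewrite eq_xvar var_kind_yvar.
case: (var_row_lshift (eqP (forallP af (lshift r a)))) => ->;
  case: (var_row_lshift (eqP (forallP af' (lshift r a)))) => -> //;
  by rewrite eqxx xy.
Qed.

Lemma eq_mnm_of_subst f f' : row_adapted f -> row_adapted f' ->
  (mnm_of f == mnm_of f') =
  ((\sum_i subst_mnm (f i))%MM == (\sum_i subst_mnm (f' i))%MM).
Proof.
move=> af af'; apply/eqP/eqP => eq_f; (suff -> : f = f' by []);
  apply: row_adapted_eq => // a; first by rewrite eq_f.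
by rewrite -!subst_mnm_sumE eq_f.
Qed.

Section Construction.
Variables (F : numFieldType) (U V : 'M[ratfun F]_(r, n)) (A0 : 'M[ratfun F]_r).
Local Notation K := (ratfun F).

Definition Ulift : 'M[K]_(n + r, N) := \matrix_(i, k) (i == var_row k)%:R.

Definition Vlift : 'M[K]_(n + r, N) := \matrix_(j, k)
  match var_kind k with
  | inl (inl a) => col_mx 0 (- col a V)
  | inl (inr a) => delta_mx (lshift r a) 0
  | inr l => col_mx (row l U)^T (row l A0)^T
  end j 0.

Lemma Vlift_xvar j a : Vlift j (xvar a) = col_mx 0 (- col a V) j 0.
Proof. by rewrite mxE var_kind_xvar. Qed.

Lemma Vlift_yvar j a : Vlift j (yvar a) = (delta_mx (lshift r a) 0 : 'cV[K]_(n + r)) j 0.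
Proof. by rewrite mxE var_kind_yvar. Qed.

Lemma Vlift_zvar j l : Vlift j (zvar l) = col_mx (row l U)^T (row l A0)^T j 0.
Proof. by rewrite mxE var_kind_zvar. Qed.

Lemma sum_Ulift_lshift (W : lmodType K) a (G : 'I_N -> W) :
  \sum_k Ulift (lshift r a) k *: G k = G (xvar a) + G (yvar a).
Proof.
rewrite big_vars; under eq_bigr do rewrite mxE var_row_xvar eq_lshift.
under [X in _ + X + _]eq_bigr do rewrite mxE var_row_yvar eq_lshift.
under [X in _ + X]eq_bigr do rewrite mxE var_row_zvar eq_lrshift scale0r.
by rewrite !sum_deltaZ big1_eq addr0.
Qed.

Lemma sum_Ulift_rshift (W : lmodType K) l (G : 'I_N -> W) :
  \sum_k Ulift (rshift n l) k *: G k = G (zvar l).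
Proof.
rewrite big_vars; under eq_bigr do rewrite mxE var_row_xvar eq_rlshift scale0r.
under [X in _ + X + _]eq_bigr do rewrite mxE var_row_yvar eq_rlshift scale0r.
under [X in _ + X]eq_bigr do rewrite mxE var_row_zvar eq_rshift.
by rewrite !big1_eq sum_deltaZ !add0r.
Qed.

Definition schur_block : 'M[{mpoly K[n]}]_(n + r) :=
  block_mx 1 (- (Xdiag F n *m (mxC n V)^T)) (mxC n U) (mxC n A0).

Lemma detP_schur_block : detP A0 U V = \det schur_block.
Proof. by rewrite det_block1 mulmxN opprK mulmxA. Qed.

Lemma Ulift_subst_Vlift :
  \matrix_(i, j) \sum_k (Ulift i k * Vlift j k) *: 'X_[subst_mnm k] = schur_block.
Proof.
apply/matrixP => i j; rewrite mxE; under eq_bigr do rewrite -scalerA.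
rewrite -(fintype.splitK i) -(fintype.splitK j).
case: (fintype.split i) => a; case: (fintype.split j) => b /=;
  rewrite ?sum_Ulift_lshift ?sum_Ulift_rshift /schur_block ?block_mxEul ?block_mxEur
    ?block_mxEdl ?block_mxEdr ?Vlift_xvar ?Vlift_yvar ?Vlift_zvar ?col_mxEu ?col_mxEd
    /subst_mnm ?var_kind_xvar ?var_kind_yvar ?var_kind_zvar mpolyX0 !mxE.
- by rewrite scale0r add0r eq_lshift eqxx andbT scaler_nat eq_sym.
- rewrite eq_rlshift scale0r addr0 scaleNr; congr (- _).
  rewrite (bigD1 a) //= big1 ?addr0 => [|c /negbTE ca].
    by rewrite !mxE eqxx mulr1n mulrC mul_mpolyC.
  by rewrite !mxE eq_sym ca mulr0n mul0r.
- exact: alg_mpolyC.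
- exact: alg_mpolyC.
Qed.

Lemma detP_subst_ones : detP A0 U V = @subst_ones F n r (detPP Ulift Vlift).
Proof.
rewrite detP_schur_block -Ulift_subst_Vlift /detPP mulmx_Xdiag_trmx.
rewrite /subst_ones -det_map_mx; congr (\det _); apply/matrixP => i j.
rewrite !mxE raddf_sum; apply: eq_bigr => k _.
by rewrite /= comp_mpolyZ -[comp_mpoly _ _]/(subst_ones _) subst_ones_mpolyX.
Qed.

Definition lift_coef (t : 'S_(n + r) * {ffun 'I_(n + r) -> 'I_N}) : K :=
  (-1) ^+ t.1 * \prod_i (Ulift i (t.2 i) * Vlift (t.1 i) (t.2 i)).

Lemma lift_coef_row_adapted t : lift_coef t != 0 -> row_adapted t.2.
Proof.
move=> nz; apply/forallP => i; apply: contraNT nz; rewrite eq_sym => /negbTE ne.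
by rewrite /lift_coef (bigD1 i) //= mxE ne !mul0r mulr0.
Qed.

Lemma detPP_expand : detPP Ulift Vlift = \sum_t lift_coef t *: 'X_[mnm_of t.2].
Proof. by rewrite /detPP mulmx_Xdiag_trmx det_mx_sumZX. Qed.

Lemma detP_expand :
  detP A0 U V = \sum_t lift_coef t *: 'X_[\sum_i subst_mnm (t.2 i)].
Proof. by rewrite detP_schur_block -Ulift_subst_Vlift det_mx_sumZX. Qed.

Lemma detPP_mcoeffs_among_detP : mcoeffs_among (detPP Ulift Vlift) (detP A0 U V).
Proof.
rewrite detPP_expand detP_expand; apply: mcoeffs_among_sumZX => t t'.
rewrite !inE => /lift_coef_row_adapted adapted_t /lift_coef_row_adapted adapted_t'.
exact: eq_mnm_of_subst.
Qed.

End Construction.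
End LiftedMatrices.

Lemma lemma12_stmt_numField (F : numFieldType) : lemma12_stmt F.
Proof.
move=> r n U V A0; exists (Ulift n r F), (Vlift U V A0); split.
  exact: detP_subst_ones.
exact/mpoly_has_lim0_among/detPP_mcoeffs_among_detP.
Qed.

Theorem lemma12 (R : realType) : lemma12_stmt R /\ lemma12_stmt (complex R).
Proof. by split; apply: lemma12_stmt_numField. Qed.
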